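(* Every non-trivial filter class $\mathsf{K}$ contained in $\mathsf{BA}_\infty$ with $\mathsf{K}\neq\mathsf{BA}_1$ contains the structure $\mathbf{B}_2\times\mathbf{B}_1=\langle \mathbf{2}^2\times\mathbf{2},\;P_2\times\{1\}\rangle$, where $\mathbf{2}^2$ is the four-element Boolean algebra, $P_2$ its set of non-zero elements and $\mathbf{2}$ the two-element Boolean algebra.
   Context: Structures are pairs $\langle\mathbf{A},F\rangle$ with $\mathbf{A}$ a Boolean algebra and $F\subseteq\mathbf{A}$. A homomorphism $h\colon\langle\mathbf{A},F\rangle\to\langle\mathbf{B},G\rangle$ is strict if $F=h^{-1}[G]$. A filter class is a class closed under isomorphism, substructures $\langle\mathbf{B},F\cap\mathbf{B}\rangle$, products $\langle\prod\mathbf{A}_i,\prod F_i\rangle$ and strict homomorphic preimages (along surjective strict homomorphisms); it is trivial if all members have $F=\mathbf{A}$. $\mathsf{BA}_\infty$ is the class of all $\langle\mathbf{A},F\rangle$ with $F$ a non-empty upset, and $\mathsf{BA}_1$ its subclass with $F$ a non-empty filter (upset closed under binary meets). *)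

From Stdlib Require Import FunctionalExtensionality.

Record BA := MkBA {
  car :> Type;
  bjoin : car -> car -> car;
  bmeet : car -> car -> car;
  bcompl : car -> car;
  bbot : car;
  btop : car;
  joinC : forall x y, bjoin x y = bjoin y x;
  meetC : forall x y, bmeet x y = bmeet y x;
  joinA : forall x y z, bjoin x (bjoin y z) = bjoin (bjoin x y) z;
  meetA : forall x y z, bmeet x (bmeet y z) = bmeet (bmeet x y) z;
  absorbJM : forall x y, bjoin x (bmeet x y) = x;
  absorbMJ : forall x y, bmeet x (bjoin x y) = x;
  distrMJ : forall x y z, bmeet x (bjoin y z) = bjoin (bmeet x y) (bmeet x z);
  join0 : forall x, bjoin x bbot = x;
  meet1 : forall x, bmeet x btop = x;
  complM : forall x, bmeet x (bcompl x) = bbot;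
  complJ : forall x, bjoin x (bcompl x) = btop
}.

Arguments bjoin {b}. Arguments bmeet {b}. Arguments bcompl {b}.
Arguments bbot {b}. Arguments btop {b}.

Definition ble {A : BA} (x y : A) : Prop := bmeet x y = x.

Definition is_hom {A B : BA} (h : A -> B) : Prop :=
  (forall x y, h (bjoin x y) = bjoin (h x) (h y)) /\
  (forall x y, h (bmeet x y) = bmeet (h x) (h y)) /\
  (forall x, h (bcompl x) = bcompl (h x)) /\
  h bbot = bbot /\ h btop = btop.

Definition strict {A B : BA} (h : A -> B) (F : A -> Prop) (G : B -> Prop) : Prop :=
  forall a, F a <-> G (h a).

Definition injective {X Y : Type} (f : X -> Y) := forall x y, f x = f y -> x = y.
Definition surjective {X Y : Type} (f : X -> Y) := forall y, exists x, f x = y.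

Section Product.
Variables (I : Type) (A : I -> BA).
Definition pcar := forall i, A i.
Definition pjoin (x y : pcar) : pcar := fun i => bjoin (x i) (y i).
Definition pmeet (x y : pcar) : pcar := fun i => bmeet (x i) (y i).
Definition pcompl (x : pcar) : pcar := fun i => bcompl (x i).
Definition pbot : pcar := fun i => bbot.
Definition ptop : pcar := fun i => btop.
Ltac fe := intros; apply functional_extensionality_dep; intro i;
  unfold pjoin, pmeet, pcompl, pbot, ptop.
Lemma p_joinC x y : pjoin x y = pjoin y x. Proof. fe; apply joinC. Qed.
Lemma p_meetC x y : pmeet x y = pmeet y x. Proof. fe; apply meetC. Qed.
Lemma p_joinA x y z : pjoin x (pjoin y z) = pjoin (pjoin x y) z. Proof. fe; apply joinA. Qed.
Lemma p_meetA x y z : pmeet x (pmeet y z) = pmeet (pmeet x y) z. Proof. fe; apply meetA. Qed.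
Lemma p_absJM x y : pjoin x (pmeet x y) = x. Proof. fe; apply absorbJM. Qed.
Lemma p_absMJ x y : pmeet x (pjoin x y) = x. Proof. fe; apply absorbMJ. Qed.
Lemma p_distr x y z : pmeet x (pjoin y z) = pjoin (pmeet x y) (pmeet x z).
Proof. fe; apply distrMJ. Qed.
Lemma p_join0 x : pjoin x pbot = x. Proof. fe; apply join0. Qed.
Lemma p_meet1 x : pmeet x ptop = x. Proof. fe; apply meet1. Qed.
Lemma p_complM x : pmeet x (pcompl x) = pbot. Proof. fe; apply complM. Qed.
Lemma p_complJ x : pjoin x (pcompl x) = ptop. Proof. fe; apply complJ. Qed.
Definition prodBA : BA :=
  MkBA pcar pjoin pmeet pcompl pbot ptop p_joinC p_meetC p_joinA p_meetA
       p_absJM p_absMJ p_distr p_join0 p_meet1 p_complM p_complJ.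
End Product.

Definition sclass := forall A : BA, (A -> Prop) -> Prop.

Definition closed_iso (K : sclass) : Prop :=
  forall (A B : BA) (F : A -> Prop) (G : B -> Prop) (h : A -> B),
    is_hom h -> injective h -> surjective h -> strict h F G ->
    K A F -> K B G.

(* substructures <B, F ∩ B>, B a subalgebra of A (given via an embedding) *)
Definition closed_sub (K : sclass) : Prop :=
  forall (A B : BA) (F : A -> Prop) (e : B -> A),
    is_hom e -> injective e -> K A F -> K B (fun b => F (e b)).

Definition closed_prod (K : sclass) : Prop :=
  forall (I : Type) (A : I -> BA) (F : forall i, A i -> Prop),
    (forall i, K (A i) (F i)) ->
    K (prodBA I A) (fun x : pcar I A => forall i, F i (x i)).

Definition closed_spre (K : sclass) : Prop :=
  forall (A B : BA) (G : B -> Prop) (h : A -> B),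
    is_hom h -> surjective h -> K B G -> K A (fun a => G (h a)).

Definition filter_class (K : sclass) : Prop :=
  closed_iso K /\ closed_sub K /\ closed_prod K /\ closed_spre K.

Definition trivial_class (K : sclass) : Prop :=
  forall (A : BA) (F : A -> Prop), K A F -> forall a, F a.

Definition upset {A : BA} (F : A -> Prop) : Prop :=
  forall x y : A, F x -> ble x y -> F y.

Definition BAinf : sclass := fun A F => (exists a, F a) /\ upset F.

Definition BA1 : sclass := fun A F =>
  (exists a, F a) /\ upset F /\ (forall x y : A, F x -> F y -> F (bmeet x y)).

(* The algebra 2^2 x 2, carrier (bool*bool)*bool, componentwise operations *)
Definition c8 := ((bool * bool) * bool)%type.
Definition j8 (x y : c8) : c8 :=
  let '((a,b),c) := x in let '((a',b'),c') := y in ((orb a a', orb b b'), orb c c').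
Definition m8 (x y : c8) : c8 :=
  let '((a,b),c) := x in let '((a',b'),c') := y in ((andb a a', andb b b'), andb c c').
Definition n8 (x : c8) : c8 := let '((a,b),c) := x in ((negb a, negb b), negb c).
Definition bot8 : c8 := ((false,false),false).
Definition top8 : c8 := ((true,true),true).
Ltac b8 := intros; repeat match goal with x : c8 |- _ => destruct x as [[? ?] ?] end;
  simpl; repeat match goal with b : bool |- _ => destruct b end; reflexivity.
Lemma e1 x y : j8 x y = j8 y x. Proof. b8. Qed.
Lemma e2 x y : m8 x y = m8 y x. Proof. b8. Qed.
Lemma e3 x y z : j8 x (j8 y z) = j8 (j8 x y) z. Proof. b8. Qed.
Lemma e4 x y z : m8 x (m8 y z) = m8 (m8 x y) z. Proof. b8. Qed.
Lemma e5 x y : j8 x (m8 x y) = x. Proof. b8. Qed.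
Lemma e6 x y : m8 x (j8 x y) = x. Proof. b8. Qed.
Lemma e7 x y z : m8 x (j8 y z) = j8 (m8 x y) (m8 x z). Proof. b8. Qed.
Lemma e8 x : j8 x bot8 = x. Proof. b8. Qed.
Lemma e9 x : m8 x top8 = x. Proof. b8. Qed.
Lemma e10 x : m8 x (n8 x) = bot8. Proof. b8. Qed.
Lemma e11 x : j8 x (n8 x) = top8. Proof. b8. Qed.
Definition BA2_2x2 : BA :=
  MkBA c8 j8 m8 n8 bot8 top8 e1 e2 e3 e4 e5 e6 e7 e8 e9 e10 e11.

Definition P2x1 (x : BA2_2x2) : Prop :=
  let '((a,b),c) := (x : c8) in (orb a b = true) /\ c = true.

(* A non-trivial class [K] inside [BA_inf] contains [<2, {1}>]: take the subalgebra
   [{0, 1}] of a member whose filter is proper.  By the prime filter theorem, a filter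
   [F] of [A] is the strict preimage of [{1}^I] along the homomorphism [A -> 2^I]
   collecting the ultrafilters that extend [F]; so [K] contains all of [BA_1].  As
   [K <> BA_1], some [<A, F>] in [K] has [F] an upset with [x, y] in [F] and [x /\ y]
   not in [F].  The partitions of unity [x /\ ~y, ~x, x /\ y] and [0, 0, 1] yield a
   homomorphism [2^2 x 2 -> A x A] along which the strict preimage of [F x F] is
   [P_2 x {1}].  Strict preimages along arbitrary homomorphisms stay in [K], by
   factoring through the image. *)
From Stdlib Require Import Classical ClassicalEpsilon FunctionalExtensionality ProofIrrelevance Bool.
From mathcomp Require classical_sets.

Arguments joinC {b}. Arguments meetC {b}. Arguments joinA {b}. Arguments meetA {b}.
Arguments absorbJM {b}. Arguments absorbMJ {b}. Arguments distrMJ {b}.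
Arguments join0 {b}. Arguments meet1 {b}. Arguments complM {b}. Arguments complJ {b}.

Section Lattice.
Variable A : BA.
Implicit Types x y z : A.

Lemma meet_idem x : bmeet x x = x.
Proof. rewrite <- (absorbJM x x) at 2. apply absorbMJ. Qed.

Lemma meet_bot x : bmeet x bbot = bbot.
Proof. rewrite <- (complM x), meetA, meet_idem. reflexivity. Qed.

Lemma ble_refl x : ble x x.
Proof. apply meet_idem. Qed.

Lemma ble_trans x y z : ble x y -> ble y z -> ble x z.
Proof. unfold ble; intros Hxy Hyz. rewrite <- Hxy, <- meetA, Hyz. reflexivity. Qed.

Lemma ble_antisym x y : ble x y -> ble y x -> x = y.
Proof. unfold ble; intros Hxy Hyx. rewrite <- Hxy, meetC. exact Hyx. Qed.

Lemma ble_top x : ble x btop.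
Proof. apply meet1. Qed.

Lemma ble_bot x : ble bbot x.
Proof. unfold ble. rewrite meetC. apply meet_bot. Qed.

Lemma ble_meetl x y : ble (bmeet x y) x.
Proof. unfold ble. rewrite (meetC (bmeet x y) x), meetA, meet_idem. reflexivity. Qed.

Lemma ble_meetr x y : ble (bmeet x y) y.
Proof. unfold ble. rewrite <- meetA, meet_idem. reflexivity. Qed.

Lemma ble_meet x y z : ble x y -> ble x z -> ble x (bmeet y z).
Proof. unfold ble; intros Hxy Hxz. rewrite meetA, Hxy, Hxz. reflexivity. Qed.

Lemma ble_meet_mono x x' y y' : ble x x' -> ble y y' -> ble (bmeet x y) (bmeet x' y').
Proof.
  intros Hx Hy. apply ble_meet.
  - eapply ble_trans; [apply ble_meetl | exact Hx].
  - eapply ble_trans; [apply ble_meetr | exact Hy].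
Qed.

Lemma ble_joinl x y : ble x (bjoin x y).
Proof. apply absorbMJ. Qed.

Lemma ble_joinr x y : ble y (bjoin x y).
Proof. unfold ble. rewrite joinC. apply absorbMJ. Qed.

Lemma join_ble x y z : ble x z -> ble y z -> ble (bjoin x y) z.
Proof.
  unfold ble; intros Hxz Hyz.
  rewrite meetC, distrMJ, (meetC z x), (meetC z y), Hxz, Hyz. reflexivity.
Qed.

Lemma join_meet_compl x y : bjoin (bmeet x y) (bmeet x (bcompl y)) = x.
Proof. rewrite <- distrMJ, complJ, meet1. reflexivity. Qed.

Lemma ble_compl_join x y : ble (bmeet (bcompl x) (bjoin x y)) y.
Proof. rewrite distrMJ, (meetC _ x), complM, joinC, join0. apply ble_meetr. Qed.

End Lattice.

Definition BA2 : BA.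
Proof.
  refine (MkBA bool orb andb negb false true _ _ _ _ _ _ _ _ _ _ _);
    intros; repeat match goal with b : bool |- _ => destruct b end; reflexivity.
Defined.

Definition meet_closed {A : BA} (F : A -> Prop) : Prop :=
  forall x y, F x -> F y -> F (bmeet x y).

Definition is_filter {A : BA} (F : A -> Prop) : Prop :=
  F btop /\ upset F /\ meet_closed F.

Lemma BA1_is_filter (A : BA) (F : A -> Prop) : BA1 A F -> is_filter F.
Proof.
  intros [[z Fz] [Fup Fmeet]]. split; [|split]; auto.
  apply (Fup z); [exact Fz | apply ble_top].
Qed.

Lemma principal_filter (A : BA) (u : A) : is_filter (ble u).
Proof.
  split; [|split].
  - apply ble_top.
  - intros x y; apply ble_trans.
  - intros x y; apply ble_meet.
Qed.

Section PrimeFilter.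
Variables (A : BA) (M : A -> Prop).
Hypotheses (Mfilter : is_filter M) (Mbot : ~ M bbot)
  (Mprime : forall b, M b \/ M (bcompl b)).

Definition indicator (z : A) : BA2 :=
  if excluded_middle_informative (M z) then true else false.

Lemma indicator_true z : indicator z = true <-> M z.
Proof. unfold indicator; destruct excluded_middle_informative; intuition discriminate. Qed.

Lemma indicator_hom : is_hom indicator.
Proof.
  destruct Mfilter as [Mtop [Mup Mmeet]].
  split; [|split; [|split; [|split]]]; intros; apply eq_true_iff_eq; simpl.
  - rewrite orb_true_iff, !indicator_true. split.
    + intro Muv. destruct (Mprime x) as [Mx|Mcx]; [left; exact Mx | right].
      apply (Mup _ _ (Mmeet _ _ Mcx Muv)), ble_compl_join.
    + intros [Mx|My]; eapply Mup; eauto using ble_joinl, ble_joinr.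
  - rewrite andb_true_iff, !indicator_true. split.
    + intro Mxy; split; eapply Mup; eauto using ble_meetl, ble_meetr.
    + intros [Mx My]; auto.
  - rewrite negb_true_iff, indicator_true, <- not_true_iff_false, indicator_true.
    split.
    + intros Mcx Mx. apply Mbot. rewrite <- (complM x). auto.
    + intro Mx. destruct (Mprime x); tauto.
  - rewrite indicator_true. intuition discriminate.
  - rewrite indicator_true. intuition.
Qed.

End PrimeFilter.

Definition maximal_avoiding {A : BA} (a : A) (M : A -> Prop) : Prop :=
  is_filter M /\ ~ M a /\
  forall T, is_filter T -> (forall z, M z -> T z) -> ~ T a -> forall z, T z -> M z.

Section MaximalFilter.
Variables (A : BA) (M : A -> Prop) (a : A).
Hypothesis Mmax : maximal_avoiding a M.

Lemma maximal_filter_escape b : ~ M b -> exists m, M m /\ ble (bmeet m b) a.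
Proof.
  destruct Mmax as [[Mtop [Mup Mmeet]] [Ma Mmaximal]].
  intro Mb. apply NNPP; intro Hno. apply Mb.
  (* the filter generated by [M] and [b] *)
  apply (Mmaximal (fun z => exists m, M m /\ ble (bmeet m b) z)).
  - split; [|split].
    + exists btop; split; [exact Mtop | apply ble_top].
    + intros u v [m [Mm Hm]] Huv. exists m; split; [exact Mm | eapply ble_trans; eauto].
    + intros u v [m [Mm Hm]] [m' [Mm' Hm']]. exists (bmeet m m'); split; [auto |].
      apply ble_meet; eapply ble_trans; [| exact Hm | | exact Hm'];
        apply ble_meet_mono; auto using ble_meetl, ble_meetr, ble_refl.
  - intros z Mz. exists z; split; [exact Mz | apply ble_meetl].
  - exact Hno.
  - exists btop; split; [exact Mtop |]. rewrite meetC, meet1. apply ble_refl.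
Qed.

Lemma maximal_filter_prime b : M b \/ M (bcompl b).
Proof.
  destruct Mmax as [[Mtop [Mup Mmeet]] [Ma _]].
  apply NNPP; intro Hno. apply not_or_and in Hno as [Mb Mcb].
  destruct (maximal_filter_escape b Mb) as [m [Mm Hm]].
  destruct (maximal_filter_escape _ Mcb) as [m' [Mm' Hm']].
  apply Ma, (Mup (bmeet m m')); [auto |].
  rewrite <- (join_meet_compl _ (bmeet m m') b).
  apply join_ble; eapply ble_trans; [| exact Hm | | exact Hm'];
    apply ble_meet_mono; auto using ble_meetl, ble_meetr, ble_refl.
Qed.

End MaximalFilter.

Section MaximalFilterExists.
Variables (A : BA) (F : A -> Prop) (a : A).
Hypotheses (Ffilter : is_filter F) (Fa : ~ F a).

(* Zorn is applied to the sets [S] with [F \/ S] a filter avoiding [a]: unlike the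
   filters containing [F], this family contains the union of the empty chain. *)
Let extend (S : A -> Prop) : A -> Prop := fun z => F z \/ S z.
Let admissible (S : A -> Prop) : Prop := is_filter (extend S) /\ ~ extend S a.

Lemma admissible_chain_union (C : (A -> Prop) -> Prop) :
  (forall S, C S -> admissible S) ->
  (forall S T, C S -> C T -> (forall z, S z -> T z) \/ (forall z, T z -> S z)) ->
  admissible (fun z => exists2 S, C S & S z).
Proof.
  intros Cadm Ctot. destruct Ffilter as [Ftop [Fup Fmeet]].
  assert (lift : forall S, C S -> forall z, extend S z -> extend (fun z => exists2 S, C S & S z) z).
  { intros S CS z [Fz|Sz]; [left | right; exists S]; auto. }
  assert (Cup : forall S, C S -> upset (extend S)) by apply Cadm.
  assert (Cmeet : forall S, C S -> meet_closed (extend S)) by apply Cadm.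
  split; [split; [|split] |].
  - left; exact Ftop.
  - intros x y [Fx|[S CS Sx]] Hxy.
    + left; exact (Fup x y Fx Hxy).
    + apply (lift S CS), (Cup S CS x); [right |]; assumption.
  - intros x y [Fx|[S CS Sx]] [Fy|[T CT Ty]].
    + left; auto.
    + apply (lift T CT), (Cmeet T CT); [left | right]; assumption.
    + apply (lift S CS), (Cmeet S CS); [right | left]; assumption.
    + destruct (Ctot S T CS CT) as [ST|TS].
      * apply (lift T CT), (Cmeet T CT); right; auto.
      * apply (lift S CS), (Cmeet S CS); right; auto.
  - intros [Fa'|[S CS Sa]]; [exact (Fa Fa') |]. apply (Cadm S CS); right; exact Sa.
Qed.

Lemma maximal_filter_exists : exists M, (forall z, F z -> M z) /\ maximal_avoiding a M.
Proof.
  destruct (@classical_sets.Zorn_bigcup A admissible) as [S [[Sfilter Sa] Smax]].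
  { intros C CP Ctot. apply admissible_chain_union; [exact CP |].
    intros S T CS CT. exact (Ctot S T CS CT). }
  exists (extend S). split; [| split; [| split]]; auto.
  - intros z Fz; left; exact Fz.
  - intros T Tfilter ST Ta z Tz. apply NNPP; intro Sz.
    assert (Text : forall w, extend T w <-> T w).
    { intro w; split; [intros [Fw|Tw]; auto; apply ST; left; auto | right; auto]. }
    apply (Smax T).
    + split; [intros w Sw; apply ST; right; exact Sw |].
      intro TS. apply Sz; right; apply TS, Tz.
    + split; [| rewrite Text; exact Ta].
      destruct Tfilter as [Ttop [Tup Tmeet]]. split; [|split].
      * apply Text, Ttop.
      * intros u v Tu Huv. apply Text. apply Text in Tu. eauto.
      * intros u v Tu Tv. apply Text. apply Text in Tu, Tv. auto.
Qed.

End MaximalFilterExists.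

Lemma ultrafilter_hom (A : BA) (F : A -> Prop) (a : A) : is_filter F -> ~ F a ->
  exists h : A -> BA2, is_hom h /\ (forall z, F z -> h z = true) /\ h a = false.
Proof.
  intros Ffilter Fa.
  destruct (maximal_filter_exists A F a Ffilter Fa) as [M [FM Mmax]].
  pose proof Mmax as [[Mtop [Mup Mmeet]] [Ma _]].
  exists (indicator A M). split; [|split].
  - apply indicator_hom.
    + split; auto.
    + intro Mbot. apply Ma, (Mup bbot); [exact Mbot | apply ble_bot].
    + apply (maximal_filter_prime A M a Mmax).
  - intros z Fz. apply indicator_true; auto.
  - apply not_true_iff_false. rewrite indicator_true. exact Ma.
Qed.

Lemma hom_separates (A : BA) (s t : A) : s <> t ->
  exists h : A -> BA2, is_hom h /\ h s <> h t.
Proof.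
  intro Hst.
  assert (sep : forall u v : A, ~ ble u v ->
    exists h : A -> BA2, is_hom h /\ h u <> h v).
  { intros u v Huv.
    destruct (ultrafilter_hom A (ble u) v (principal_filter A u) Huv) as [h [Hh [Hu Hv]]].
    exists h; split; [exact Hh |]. rewrite (Hu u (ble_refl A u)), Hv. discriminate. }
  destruct (classic (ble s t)) as [Hle|Hle]; [| exact (sep s t Hle)].
  destruct (classic (ble t s)) as [Hge|Hge].
  - exfalso; apply Hst, ble_antisym; assumption.
  - destruct (sep t s Hge) as [h [Hh Hts]]. exists h; split; auto.
Qed.

(* Decides an equation of a Boolean algebra [A], using the equational hypotheses on [A]
   in the context: if it failed, a homomorphism into [2] would separate its two sides. *)
Ltac boolean :=
  match goal with |- @eq (car ?A) ?s ?t =>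
    apply NNPP; let Hne := fresh "Hne" in intro Hne;
    let h := fresh "h" in let Hj := fresh "Hj" in let Hm := fresh "Hm" in
    let Hc := fresh "Hc" in let H0 := fresh "H0" in let H1 := fresh "H1" in
    let Hst := fresh "Hst" in
    destruct (hom_separates A s t Hne) as [h [[Hj [Hm [Hc [H0 H1]]]] Hst]];
    clear Hne;
    repeat match goal with H : @eq (car A) _ _ |- _ => apply (f_equal h) in H; revert H end;
    revert Hst;
    repeat progress rewrite ?Hj, ?Hm, ?Hc, ?H0, ?H1;
    simpl;
    repeat match goal with |- context [h ?z] => destruct (h z) end;
    simpl; intros; congruence
  end.

Section Subalgebra.
Variables (B : BA) (S : B -> Prop).
Hypotheses (Sjoin : forall u v, S u -> S v -> S (bjoin u v))
  (Smeet : forall u v, S u -> S v -> S (bmeet u v))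
  (Scompl : forall u, S u -> S (bcompl u)) (Sbot : S bbot) (Stop : S btop).

Lemma sig_eq (u v : {b : B | S b}) : proj1_sig u = proj1_sig v -> u = v.
Proof. destruct u, v; simpl; intros; subst; f_equal; apply proof_irrelevance. Qed.

Definition subBA : BA.
Proof.
  refine (MkBA {b : B | S b}
    (fun u v => exist _ _ (Sjoin _ _ (proj2_sig u) (proj2_sig v)))
    (fun u v => exist _ _ (Smeet _ _ (proj2_sig u) (proj2_sig v)))
    (fun u => exist _ _ (Scompl _ (proj2_sig u)))
    (exist _ _ Sbot) (exist _ _ Stop) _ _ _ _ _ _ _ _ _ _ _);
  intros; apply sig_eq; simpl;
  first [ apply joinC | apply meetC | apply joinA | apply meetA | apply absorbJM
        | apply absorbMJ | apply distrMJ | apply join0 | apply meet1 | apply complM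
        | apply complJ ].
Defined.

Lemma sub_incl_hom : is_hom (fun u : subBA => proj1_sig u).
Proof. repeat split. Qed.

Lemma sub_incl_injective : injective (fun u : subBA => proj1_sig u).
Proof. intros u v; apply sig_eq. Qed.

End Subalgebra.

Section Image.
Variables (A B : BA) (H : A -> B).
Hypothesis Hhom : is_hom H.

Definition in_image (b : B) : Prop := exists a, H a = b.

Lemma image_join u v : in_image u -> in_image v -> in_image (bjoin u v).
Proof. intros [a <-] [a' <-]. exists (bjoin a a'). apply Hhom. Qed.

Lemma image_meet u v : in_image u -> in_image v -> in_image (bmeet u v).
Proof. intros [a <-] [a' <-]. exists (bmeet a a'). apply Hhom. Qed.

Lemma image_compl u : in_image u -> in_image (bcompl u).
Proof. intros [a <-]. exists (bcompl a). apply Hhom. Qed.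

Lemma image_bot : in_image bbot.
Proof. exists bbot. apply Hhom. Qed.

Lemma image_top : in_image btop.
Proof. exists btop. apply Hhom. Qed.

Definition imageBA : BA :=
  subBA B in_image image_join image_meet image_compl image_bot image_top.

Definition corestrict (a : A) : imageBA := exist _ (H a) (ex_intro _ a eq_refl).

Lemma corestrict_hom : is_hom corestrict.
Proof.
  destruct Hhom as [Hj [Hm [Hc [H0 H1]]]].
  repeat split; intros; apply sig_eq; simpl; auto.
Qed.

Lemma corestrict_surjective : surjective corestrict.
Proof. intros [b [a <-]]. exists a. apply sig_eq. reflexivity. Qed.

End Image.

Lemma prod_hom (B : BA) (I : Type) (A : I -> BA) (f : forall i, B -> A i) :
  (forall i, is_hom (f i)) -> is_hom (fun b => (fun i => f i b) : prodBA I A).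
Proof.
  intro fhom.
  repeat split; intros; apply functional_extensionality_dep; intro i; apply fhom.
Qed.

Section Partition.
Variables (A : BA) (u v w : A).
Hypotheses (Huv : bmeet u v = bbot) (Huw : bmeet u w = bbot) (Hvw : bmeet v w = bbot)
  (Hcover : bjoin u (bjoin v w) = btop).

Definition sel (p : bool) (e : A) : A := if p then e else bbot.

Definition partition_map (s : BA2_2x2) : A :=
  let '((p, q), r) := (s : c8) in bjoin (sel p u) (bjoin (sel q v) (sel r w)).

Lemma partition_map_hom : is_hom partition_map.
Proof.
  split; [|split; [|split; [|split]]]; repeat intros [[? ?] ?];
    repeat match goal with b : bool |- _ => destruct b end;
    unfold partition_map, sel; simpl; boolean.
Qed.

End Partition.

Lemma class_ext (K : sclass) (A : BA) (F G : A -> Prop) :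
  closed_iso K -> K A F -> (forall a, F a <-> G a) -> K A G.
Proof.
  intros Kiso KF FG. apply (Kiso A A F G (fun a => a)); auto.
  - repeat split.
  - intros x y; auto.
  - intro y; exists y; reflexivity.
Qed.

Lemma class_hom_preimage (K : sclass) (A B : BA) (G : B -> Prop) (H : A -> B) :
  filter_class K -> is_hom H -> K B G -> K A (fun a => G (H a)).
Proof.
  intros [_ [Ksub [_ Kspre]]] Hhom KG.
  exact (Kspre _ _ _ _ (corestrict_hom A B H Hhom) (corestrict_surjective A B H Hhom)
    (Ksub B (imageBA A B H Hhom) G _
       (sub_incl_hom _ _ _ _ _ _ _) (sub_incl_injective _ _ _ _ _ _ _) KG)).
Qed.

Lemma bool_embed_hom (A : BA) : is_hom (fun b : BA2 => if b then btop else bbot : A).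
Proof.
  split; [|split; [|split; [|split]]]; intros;
    repeat match goal with b : car BA2 |- _ => destruct b end; simpl; boolean.
Qed.

Lemma two_in_class (K : sclass) : filter_class K -> ~ trivial_class K ->
  (forall (A : BA) (F : A -> Prop), K A F -> BAinf A F) -> K BA2 (fun b => b = true).
Proof.
  intros KK Knt Kinf.
  assert (exists A F, K A F /\ exists a, ~ F a) as [A [F [KF [a Fa]]]].
  { apply NNPP; intro Hno; apply Knt; intros A F KF a.
    apply NNPP; intro Fa; apply Hno; eauto. }
  destruct (Kinf A F KF) as [[z Fz] Fup].
  apply (class_ext K _ _ _ (proj1 KK) (class_hom_preimage K _ _ F _ KK (bool_embed_hom A) KF)).
  intros [|]; split; auto.
  - intros _. apply (Fup z); [exact Fz | apply ble_top].
  - intro Fbot. exfalso. apply Fa, (Fup bbot); [exact Fbot | apply ble_bot].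
  - discriminate.
Qed.

Lemma BA1_in_class (K : sclass) (A : BA) (F : A -> Prop) :
  filter_class K -> K BA2 (fun b => b = true) -> BA1 A F -> K A F.
Proof.
  intros KK K2 HF.
  destruct (choice (fun (i : {z : A | ~ F z}) (h : A -> BA2) =>
    is_hom h /\ (forall z, F z -> h z = true) /\ h (proj1_sig i) = false)) as [h Hh].
  { intros [z Fz]. exact (ultrafilter_hom A F z (BA1_is_filter A F HF) Fz). }
  pose proof (class_hom_preimage K _ _ _ _ KK
    (prod_hom A _ (fun _ => BA2) h (fun i => proj1 (Hh i)))
    (proj1 (proj2 (proj2 KK)) _ (fun _ => BA2) (fun _ b => b = true) (fun _ => K2))) as KA.
  apply (class_ext K _ _ _ (proj1 KK) KA). intro z; split.
  - intro Hz. apply NNPP; intro Fz.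
    destruct (Hh (exist _ z Fz)) as [_ [_ Hf]]. simpl in Hf.
    specialize (Hz (exist _ z Fz)). simpl in Hz. congruence.
  - intros Fz i. apply (Hh i), Fz.
Qed.

Lemma B2xB1_in_class (K : sclass) (A : BA) (F : A -> Prop) (x y : A) :
  filter_class K -> K A F -> upset F -> F x -> F y -> ~ F (bmeet x y) -> K BA2_2x2 P2x1.
Proof.
  intros KK KF Fup Fx Fy Fxy.
  pose (f (i : bool) := if i then partition_map A (bmeet x (bcompl y)) (bcompl x) (bmeet x y)
                        else partition_map A bbot bbot btop).
  assert (fhom : forall i, is_hom (f i)) by (intros [|]; apply partition_map_hom; boolean).
  apply (class_ext K _ _ _ (proj1 KK) (class_hom_preimage K _ _ _ _ KK
    (prod_hom _ bool (fun _ => A) f fhom)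
    (proj1 (proj2 (proj2 KK)) bool (fun _ => A) (fun _ => F) (fun _ => KF)))).
  assert (Fin : forall e, ble x e \/ ble y e -> F e).
  { intros e [He|He]; [apply (Fup x) | apply (Fup y)]; assumption. }
  assert (Fout : forall e, ble e (bmeet x y) -> ~ F e).
  { intros e He Fe. apply Fxy, (Fup e); assumption. }
  assert (Fsecond : forall p q r, F (f false ((p, q), r)) <-> r = true).
  { intros [|] [|] [|]; unfold f, partition_map, sel; simpl; split; auto;
      solve [ discriminate | intros _; apply Fin; left; unfold ble; boolean
            | intro Fe; exfalso; revert Fe; apply Fout; unfold ble; boolean ]. }
  assert (Ffirst : forall p q, F (f true ((p, q), true)) <-> p || q = true).
  { intros [|] [|]; unfold f, partition_map, sel; simpl; split; auto;
      solve [ discriminate | intros _; apply Fin; left; unfold ble; boolean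
            | intros _; apply Fin; right; unfold ble; boolean
            | intro Fe; exfalso; revert Fe; apply Fout; unfold ble; boolean ]. }
  intros [[p q] r]; unfold P2x1; split.
  - intro Hall. assert (r = true) as -> by apply (Fsecond p q r), Hall.
    split; [apply Ffirst, Hall | reflexivity].
  - intros [Hpq ->] [|]; [apply Ffirst | apply (Fsecond p q)]; auto.
Qed.

Theorem mainTheorem17 (K : sclass) :
  filter_class K ->
  ~ trivial_class K ->
  (forall (A : BA) (F : A -> Prop), K A F -> BAinf A F) ->
  ~ (forall (A : BA) (F : A -> Prop), K A F <-> BA1 A F) ->
  K BA2_2x2 P2x1.
Proof.
  intros KK Knt Kinf KBA1.
  apply not_all_ex_not in KBA1 as [A HA]. apply not_all_ex_not in HA as [F HF].
  destruct (classic (K A F)) as [KF|KF].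
  - destruct (Kinf A F KF) as [Fne Fup].
    assert (exists x y, F x /\ F y /\ ~ F (bmeet x y)) as [x [y [Fx [Fy Fxy]]]].
    { apply NNPP; intro Hno. apply HF; split; [intros _; split; [|split] | intros _]; auto.
      intros x y Fx Fy. apply NNPP; intro Fxy. apply Hno; eauto. }
    exact (B2xB1_in_class K A F x y KK KF Fup Fx Fy Fxy).
  - exfalso. apply HF; split; [contradiction |].
    exact (BA1_in_class K A F KK (two_in_class K KK Knt Kinf)).
Qed.
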